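(* Let $i\ge 3$ and $k\ge 3$ be integers, let $p$ be a nonnegative integer, and put $r=\lfloor (L_i-1)/F_k\rfloor$. If $r\ge p$ and $(r,p)\ne(0,0)$, then $$g_p(L_i,L_{i+2},L_{i+k})=\begin{cases}(L_i-rF_k-1)L_{i+2}+(r+p)L_{i+k}-L_i & \text{if } (L_i-rF_k)L_{i+2}\ge F_{k-2}L_i,\\ (F_k-1)L_{i+2}+(r+p-1)L_{i+k}-L_i & \text{if } (L_i-rF_k)L_{i+2}< F_{k-2}L_i.\end{cases}$$
   Context: Fibonacci numbers: $F_0=0$, $F_1=1$, $F_n=F_{n-1}+F_{n-2}$. Lucas numbers: $L_0=2$, $L_1=1$, $L_n=L_{n-1}+L_{n-2}$. For positive integers $a_1,\dots,a_l$ with $\gcd(a_1,\dots,a_l)=1$ and an integer $n$, let $d(n;a_1,\dots,a_l)$ be the number of tuples $(x_1,\dots,x_l)$ of nonnegative integers with $a_1x_1+\dots+a_lx_l=n$. For a nonnegative integer $p$, the $p$-Frobenius number $g_p(a_1,\dots,a_l)$ is the largest integer $n$ with $d(n;a_1,\dots,a_l)\le p$. *)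

From mathcomp Require Import all_boot all_order all_algebra.
Set Implicit Arguments. Unset Strict Implicit. Unset Printing Implicit Defensive.
Import Order.TTheory GRing.Theory Num.Theory.

Fixpoint fib (n : nat) : nat :=
  match n with
  | 0 => 0
  | 1 => 1
  | (m.+1 as k).+1 => fib k + fib m
  end.

Fixpoint lucas (n : nat) : nat :=
  match n with
  | 0 => 2
  | 1 => 1
  | (m.+1 as k).+1 => lucas k + lucas m
  end.

(* dcount s n = number of tuples (x_1,...,x_l) of nonnegative integers with
   a_1 x_1 + ... + a_l x_l = n, where s = [:: a_1; ...; a_l] consists of
   positive integers (so each x_j <= n). *)
Fixpoint dcount (s : seq nat) (n : nat) : nat :=
  match s with
  | [::] => n == 0
  | a :: s' => \sum_(x < n.+1) (if a * x <= n then dcount s' (n - a * x) else 0)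
  end.

Definition dnum (n : int) (s : seq nat) : nat :=
  match n with
  | Posz m => dcount s m
  | Negz _ => 0
  end.

Definition is_p_frobenius (p : nat) (s : seq nat) (g : int) : Prop :=
  (dnum g s <= p)%N /\ (forall n : int, (g < n)%R -> (p < dnum n s)%N).

From mathcomp Require Import all_boot all_order all_algebra.
From mathcomp Require Import zify ring.
Import Order.TTheory GRing.Theory Num.Theory.

(* Put a = L_i, b = L_(i+2), c = L_(i+k), F = F_k and G = F_(k-2), so that
   c = F b - G a and gcd(a, b) = 1.  A representation a x + b y + c z of n is
   b t + a (x - G z) with t = y + F z, so t is determined modulo a by n, and
   for a fixed t the usable z are those with F z <= t and x >= 0.  Each of the
   two candidate values b T - a G Z - a can only be reached with t = T - a,
   which leaves at most p choices of z; any larger n, with residue t0 < a,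
   offers p + 1 choices of z spread over the cosets t0 and t0 + a. *)

Lemma fibSS n : fib n.+2 = fib n.+1 + fib n. Proof. by []. Qed.
Lemma lucasSS n : lucas n.+2 = lucas n.+1 + lucas n. Proof. by []. Qed.

Lemma fib_gt0 n : 0 < fib n.+1.
Proof.
suff: 0 < fib n.+1 /\ 0 < fib n.+2 by case.
by elim: n => [|n [IH1 IH2]] //; split; rewrite // fibSS addn_gt0 IH2.
Qed.

Lemma lucas_gt0 n : 0 < lucas n.
Proof. by elim: n => [|[|n] IH] //=; rewrite addn_gt0 IH. Qed.

Lemma lucas_addS i k : lucas (i + k.+1) = fib k.+1 * lucas i.+1 + fib k * lucas i.
Proof.
elim/ltn_ind: k => -[|[|k]] IH; rewrite ?addn1 ?addn2 ?mul1n ?mul0n ?addn0 //.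
rewrite !addnS lucasSS -!addnS !IH // !fibSS; lia.
Qed.

Lemma lucas_addn_fib i k :
  lucas (i + k.+2) + fib k * lucas i = fib k.+2 * lucas (i + 2).
Proof. rewrite lucas_addS addn2 lucasSS fibSS; lia. Qed.

Lemma leq_fib_lucas_addn i k : fib k * lucas i <= lucas (i + k.+2).
Proof.
have le_fib : fib k <= fib k.+1 by case: k => // k; rewrite fibSS leq_addr.
by rewrite lucas_addS (leq_trans _ (leq_addl _ _)) // leq_mul2r le_fib orbT.
Qed.

Lemma coprime_lucasS n : coprime (lucas n) (lucas n.+1).
Proof. by elim: n => // n IH; rewrite /coprime lucasSS gcdnDl gcdnC. Qed.

Lemma coprime_lucas_addn2 n : coprime (lucas n) (lucas (n + 2)).
Proof. by rewrite addn2 /coprime lucasSS gcdnDr; apply: coprime_lucasS. Qed.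

Lemma dcount_cons_widen a s n N : 0 < a -> n <= N ->
  dcount (a :: s) n =
  \sum_(x < N.+1) (if a * x <= n then dcount s (n - a * x) else 0).
Proof.
move=> a_gt0 le_nN /=.
pose f x := if a * x <= n then dcount s (n - a * x) else 0.
rewrite (big_ord_widen _ f (_ : n < N.+1)) // big_mkcond; apply: eq_bigr => x _.
by case: (ltnP x n.+1) => // lt_nx; rewrite leqNgt (leq_trans lt_nx) ?leq_pmull.
Qed.

Lemma dcount1_sum c m N : 0 < c -> m <= N ->
  dcount [:: c] m = \sum_(z < N.+1) (c * z == m : nat).
Proof.
move=> c_gt0 le_mN; rewrite (@dcount_cons_widen c [::] m N c_gt0 le_mN).
apply: eq_bigr => z _ /=; case: leqP => ?; last by case: eqP => //; lia.
by congr nat_of_bool; apply/eqP/eqP; lia.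
Qed.

Lemma dcount2_sum b c m N : 0 < b -> 0 < c -> m <= N ->
  dcount [:: b; c] m = \sum_(y < N.+1) \sum_(z < N.+1) (b * y + c * z == m : nat).
Proof.
move=> b_gt0 c_gt0 le_mN; rewrite (@dcount_cons_widen b [:: c] m N b_gt0 le_mN).
apply: eq_bigr => y _; case: leqP => le_by.
  rewrite (@dcount1_sum c _ N) //; last by lia.
  by apply: eq_bigr => z _; congr nat_of_bool; apply/eqP/eqP; lia.
by rewrite big1 // => z _ /=; case: eqP => //; lia.
Qed.

Lemma dcount3_card a b c n : 0 < a -> 0 < b -> 0 < c ->
  dcount [:: a; b; c] n =
  #|[set t : 'I_n.+1 * ('I_n.+1 * 'I_n.+1) | a * t.1 + b * t.2.1 + c * t.2.2 == n]|.
Proof.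
move=> a_gt0 b_gt0 c_gt0.
pose E (x : 'I_n.+1) (yz : 'I_n.+1 * 'I_n.+1) := (a * x + b * yz.1 + c * yz.2 == n : nat).
transitivity (\sum_(t : 'I_n.+1 * ('I_n.+1 * 'I_n.+1)) E t.1 t.2); last first.
  by rewrite -sum1_card [RHS]big_mkcond; apply: eq_bigr => t _; rewrite inE /E; case: eqP.
rewrite -pair_bigA.
rewrite (@dcount_cons_widen a [:: b; c] n n a_gt0 (leqnn n)).
apply: eq_bigr => x _; rewrite -(pair_bigA _ (fun y z => E x (y, z))) /E.
case: leqP => le_ax.
  rewrite (@dcount2_sum b c _ n) ?leq_subr //.
  by apply: eq_bigr => y _; apply: eq_bigr => z _ /=; congr nat_of_bool; apply/eqP/eqP; lia.
by rewrite big1 // => y _; rewrite big1 // => z _ /=; case: eqP => //; lia.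
Qed.

Section RepresentationCount.
Variables a b c : nat.
Hypotheses (a_gt0 : 0 < a) (b_gt0 : 0 < b) (c_gt0 : 0 < c).

Let reps N :=
  [set t : 'I_N.+1 * ('I_N.+1 * 'I_N.+1) | a * t.1 + b * t.2.1 + c * t.2.2 == N].

Lemma dnum3_leq (n : int) p (y_of : nat -> nat) :
  (forall x y z : nat, Posz (a * x + b * y + c * z) = n -> z < p /\ y = y_of z) ->
  dnum n [:: a; b; c] <= p.
Proof.
case: n => [N|//] rep_z.
pose z_of (t : 'I_N.+1 * ('I_N.+1 * 'I_N.+1)) : nat := t.2.2.
have rep_t t : t \in reps N -> t.2.2 < p /\ t.2.1 = y_of t.2.2 :> nat.
  by rewrite inE => /eqP eq_tN; apply: (rep_z t.1); rewrite eq_tN.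
have z_of_inj : {in reps N &, injective z_of}.
  move=> [x1 [y1 z1]] [x2 [y2 z2]] t1N t2N; rewrite /z_of /= => eq_z.
  have [_ eq_y1] := rep_t _ t1N; have [_ eq_y2] := rep_t _ t2N.
  move: t1N t2N; rewrite !inE /= => /eqP t1N /eqP t2N.
  have eq_y : y1 = y2 by apply: val_inj; rewrite /= eq_y1 eq_y2 /= eq_z.
  have eq_x : x1 = x2.
    by apply: ord_inj; apply/eqP; rewrite -(eqn_pmul2l a_gt0); move: t1N; rewrite eq_y; lia.
  by rewrite eq_x eq_y (ord_inj eq_z).
rewrite /dnum dcount3_card // -(size_image z_of) -(size_iota 0 p) uniq_leq_size //.
  by rewrite map_inj_in_uniq ?enum_uniq // => t1 t2; rewrite !mem_enum; apply: z_of_inj.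
by move=> z /imageP [t /rep_t [lt_zp _] ->]; rewrite mem_iota.
Qed.

Lemma dnum3_gt (n : int) p (zs : seq nat) :
  uniq zs -> p < size zs ->
  (forall z, z \in zs -> exists x y : nat, Posz (a * x + b * y + c * z) = n) ->
  p < dnum n [:: a; b; c].
Proof.
case: zs => [//|z0 zs'] uniq_zs lt_p_zs rep_zs.
have [N eq_nN] : exists N : nat, n = N.
  by have [x [y <-]] := rep_zs z0 (mem_head _ _); exists (a * x + b * y + c * z0).
subst n.
pose z_of (t : 'I_N.+1 * ('I_N.+1 * 'I_N.+1)) : nat := t.2.2.
rewrite /dnum dcount3_card // -(size_image z_of) (leq_trans lt_p_zs) //.
apply: uniq_leq_size uniq_zs _ => z /rep_zs [x [y [eq_N]]].
have lt_N u v : 0 < u -> u * v <= N -> v < N.+1.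
  by move=> u_gt0 le_uvN; rewrite ltnS (leq_trans (leq_pmull v u_gt0)).
have hx : x < N.+1 by apply: (lt_N a); lia.
have hy : y < N.+1 by apply: (lt_N b); lia.
have hz : z < N.+1 by apply: (lt_N c); lia.
by apply/imageP; exists (Ordinal hx, (Ordinal hy, Ordinal hz)); rewrite // inE eq_N.
Qed.
End RepresentationCount.

Local Open Scope ring_scope.

Lemma coprime_mulz_eq (a b : nat) (u v : int) : (0 < a)%N -> coprime a b ->
  b%:Z * u = a%:Z * v -> exists j : int, u = a%:Z * j /\ v = b%:Z * j.
Proof.
move=> a_gt0 co_ab eq_bu_av.
have /dvdzP [j eq_u] : (a%:Z %| u)%Z.
  by rewrite -(@Gauss_dvdzr _ b%:Z) ?coprimezE //; apply/dvdzP; exists v; rewrite eq_bu_av mulrC.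
exists j; split; first by rewrite eq_u mulrC.
apply: (@mulfI _ a%:Z); first by apply/eqP; lia.
by rewrite -eq_bu_av eq_u; ring.
Qed.

Lemma residue_decomp (a b : nat) (n : int) : (0 < a)%N -> coprime a b ->
  exists (t : nat) (m : int), (t < a)%N /\ n = b%:Z * t%:Z + a%:Z * m.
Proof.
move=> a_gt0 /eqP co_ab; have [u [v bezout]] := Bezoutz a b.
rewrite /gcdz /= co_ab in bezout.
have a_neq0 : a%:Z != 0 by apply/eqP; lia.
have mod_ge0 := modz_ge0 (n * v) a_neq0.
have mod_lt : ((n * v) %% a%:Z < a%:Z)%Z by rewrite ltz_pmod // ltz_nat.
exists (absz ((n * v) %% a%:Z)%Z), (n * u + b%:Z * ((n * v) %/ a%:Z)%Z); split; first by lia.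
have e1 : n * (u * a%:Z + v * b%:Z) = n by rewrite bezout mulr1.
have e2 := divz_eq (n * v) a%:Z.
rewrite gez0_abs //; nia.
Qed.

Lemma mulz_gtN_ge0 {a : nat} {w : int} : (0 < a)%N -> - a%:Z < a%:Z * w -> 0 <= w.
Proof.
move=> a_gt0 lt_w; rewrite leNgt; apply/negP => w_lt0.
by have := ler_wpM2l (ler0n _ a) (_ : w <= -1); lia.
Qed.

Section FrobeniusTriple.
Variables a b c F G r : nat.
Hypotheses (a_gt0 : (0 < a)%N) (b_gt0 : (0 < b)%N) (c_gt0 : (0 < c)%N) (F_gt0 : (0 < F)%N).
Hypothesis c_def : (c + G * a = F * b)%N.
Hypothesis le_Ga_c : (G * a <= c)%N.
Hypothesis coprime_ab : coprime a b.
Hypotheses (r_gt0 : (0 < r)%N) (lt_Fr_a : (F * r < a)%N) (le_a_Fr1 : (a <= F * r + F)%N).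

Let c_mul (u : int) : c%:Z * u = F%:Z * b%:Z * u - G%:Z * a%:Z * u.
Proof. by rewrite -mulrBl; congr (_ * _); lia. Qed.

Let le_F_a : (F <= a)%N.
Proof. by rewrite (leq_trans (leq_pmulr F r_gt0)) // ltnW. Qed.

Lemma rep_coset {x y z : nat} {T Z : int} :
  (a * x + b * y + c * z)%N%:Z = b%:Z * T - a%:Z * G%:Z * Z - a%:Z ->
  T - F%:Z * Z <= F%:Z - 1 -> T < 2 * a%:Z ->
  (y + F * z)%N%:Z = T - a%:Z.
Proof.
move=> eq_rep le_T lt_T_2a; have c_z := c_mul z%:Z.
have [j [eq_Tt eq_K]] : exists j : int,
    T - (y + F * z)%N%:Z = a%:Z * j /\ (x + 1)%N%:Z + G%:Z * (Z - z%:Z) = b%:Z * j.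
  by apply: coprime_mulz_eq => //; lia.
(* Only j = 1 is compatible with the bounds on T. *)
set d := z%:Z - Z.
have le_Fd : F%:Z * d <= F%:Z - 1 - a%:Z * j by lia.
have ge_Gd : 1 - b%:Z * j <= G%:Z * d by lia.
have [lt_j0 | ge_j0] := ltrP j 0.
  have c_j := c_mul j.
  have := ler_wpM2l (ler0n _ G) le_Fd; have := ler_wpM2l (ler0n _ F) ge_Gd.
  have : c%:Z <= c%:Z * - j by rewrite ler_peMr //; lia.
  have : G%:Z * F%:Z <= G%:Z * a%:Z by rewrite ler_wpM2l //; lia.
  lia.
have [j0 | j_neq0] := eqVneq j 0.
  rewrite j0 in le_Fd ge_Gd.
  have d_ge1 : 1 <= d.
    rewrite leNgt; apply/negP => lt_d1.
    by have := ler_wpM2l (ler0n _ G) (_ : d <= 0); lia.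
  by have := ler_wpM2l (ler0n _ F) d_ge1; lia.
have [j1 | j_neq1] := eqVneq j 1; first by lia.
by have := ler_wpM2l (ler0n _ a) (_ : 2 <= j); lia.
Qed.

Lemma dnum_coset_leq p (T Z : int) :
  T - F%:Z * Z <= F%:Z - 1 -> T - a%:Z < F%:Z * p%:Z -> T < 2 * a%:Z ->
  (dnum (b%:Z * T - a%:Z * G%:Z * Z - a%:Z) [:: a; b; c] <= p)%N.
Proof.
move=> le_T lt_Ta_Fp lt_T_2a.
apply: (@dnum3_leq a b c a_gt0 b_gt0 c_gt0 _ p (fun z => absz (T - a%:Z) - F * z)%N).
move=> x y z eq_rep.
have eq_yz := rep_coset eq_rep le_T lt_T_2a.
by split; [rewrite -(ltn_pmul2l F_gt0) | ]; lia.
Qed.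

Lemma reps_on_range {t lo hi : nat} {m : int} :
  (F * hi <= t)%N -> 0 <= m + G%:Z * lo%:Z ->
  forall z : nat, (lo <= z <= hi)%N ->
  exists x y : nat, (a * x + b * y + c * z)%N%:Z = b%:Z * t%:Z + a%:Z * m.
Proof.
move=> le_Fhi_t m_lo z /andP [le_lo_z le_z_hi].
have le_Fz_t : (F * z <= t)%N by rewrite (leq_trans _ le_Fhi_t) // leq_pmul2l.
have ge_Gz : G%:Z * lo%:Z <= G%:Z * z%:Z by rewrite ler_wpM2l.
exists (absz (m + G%:Z * z%:Z)), (t - F * z)%N.
rewrite !PoszD !PoszM -(subzn le_Fz_t) gez0_abs; last by lia.
have := c_mul z%:Z; lia.
Qed.

(* The two branches of the formula for g_p, rewritten with c = F b - G a. *)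
Definition g_case1 p : int :=
  b%:Z * (a%:Z - 1 + p%:Z * F%:Z) - a%:Z * G%:Z * (r%:Z + p%:Z) - a%:Z.
Definition g_case2 p : int :=
  b%:Z * ((r%:Z + p%:Z) * F%:Z - 1) - a%:Z * G%:Z * (r%:Z + p%:Z - 1) - a%:Z.

Let le_2Ga_Fb : (2 * G * a <= F * b)%N. Proof. lia. Qed.

Lemma coset_low_le_max {p t q : nat} :
  (F * q <= t)%N -> (t < F * q + F)%N -> (t < a)%N -> (p <= q)%N ->
  b%:Z * t%:Z - a%:Z * G%:Z * (q%:Z - p%:Z) - a%:Z <= Num.max (g_case1 p) (g_case2 p).
Proof.
move=> le_Fq_t lt_t_Fq1 lt_t_a le_p_q; rewrite le_max /g_case1 /g_case2.
have le_q_r : (q <= r)%N by rewrite -ltnS -(ltn_pmul2l F_gt0); lia.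
have p_slack : 0 <= p%:Z * (F%:Z * b%:Z - 2 * G%:Z * a%:Z) by apply: mulr_ge0; lia.
apply/orP; have [-> | lt_q_r] := eqVneq q r; [left | right].
  have t_slack : 0 <= b%:Z * (a%:Z - 1 - t%:Z) by apply: mulr_ge0; lia.
  lia.
have t_slack : 0 <= b%:Z * (F%:Z * q%:Z + F%:Z - 1 - t%:Z) by apply: mulr_ge0; lia.
have q_slack : 0 <= (r%:Z - 1 - q%:Z) * (F%:Z * b%:Z - G%:Z * a%:Z).
  by apply: mulr_ge0; lia.
lia.
Qed.

Lemma coset_high_le_max {p t q q' : nat} :
  (F * q <= t)%N -> (t < F * q + F)%N -> (F * q' <= t + a)%N -> (t + a < F * q' + F)%N ->
  (q < p)%N ->
  b%:Z * (t%:Z + a%:Z) - a%:Z * G%:Z * (q'%:Z + q%:Z + 1 - p%:Z) - a%:Z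
  <= Num.max (g_case1 p) (g_case2 p).
Proof.
move=> le_Fq_t lt_t_Fq1 le_Fq'_ta lt_ta_Fq'1 lt_q_p; rewrite le_max /g_case1 /g_case2.
have ge_q' : (q + r <= q')%N by rewrite -ltnS -(ltn_pmul2l F_gt0); lia.
have le_q' : (q' <= q + r + 1)%N by rewrite -ltnS -(ltn_pmul2l F_gt0); lia.
have p_slack : 0 <= (p%:Z - 1 - q%:Z) * (F%:Z * b%:Z - 2 * G%:Z * a%:Z).
  by apply: mulr_ge0; lia.
apply/orP; have [-> | ne_q'] := eqVneq q' (q + r + 1)%N; [left | right].
  have t_slack : 0 <= b%:Z * (F%:Z * q%:Z + F%:Z - 1 - t%:Z) by apply: mulr_ge0; lia.
  lia.
have eq_q' : q' = (q + r)%N by move/eqP: ne_q'; lia.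
have t_slack : 0 <= b%:Z * (F%:Z * (q%:Z + r%:Z + 1) - 1 - t%:Z - a%:Z).
  by apply: mulr_ge0; lia.
lia.
Qed.

Lemma dnum_g_case1_leq p : (p <= r)%N -> (dnum (g_case1 p) [:: a; b; c] <= p)%N.
Proof.
move=> le_p_r; have le_pF_rF : (p * F <= r * F)%N by rewrite leq_mul2r le_p_r orbT.
apply: (@dnum_coset_leq p (a%:Z - 1 + p%:Z * F%:Z) (r%:Z + p%:Z)); lia.
Qed.

Lemma dnum_g_case2_leq p : (p <= r)%N -> (dnum (g_case2 p) [:: a; b; c] <= p)%N.
Proof.
move=> le_p_r; have le_pF_rF : (p * F <= r * F)%N by rewrite leq_mul2r le_p_r orbT.
apply: (@dnum_coset_leq p ((r%:Z + p%:Z) * F%:Z - 1) (r%:Z + p%:Z - 1)); lia.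
Qed.

Let divn_bounds t : (F * (t %/ F) <= t < F * (t %/ F) + F)%N.
Proof. by rewrite mulnC leq_trunc_div /= {1}(divn_eq t F) mulnC ltn_add2l ltn_pmod. Qed.

Lemma dnum_gt_one_coset {p t : nat} {m : int} : (t < a)%N -> (p <= t %/ F)%N ->
  Num.max (g_case1 p) (g_case2 p) < b%:Z * t%:Z + a%:Z * m ->
  (p < dnum (b%:Z * t%:Z + a%:Z * m) [:: a; b; c])%N.
Proof.
set q := (t %/ F)%N => lt_t_a le_p_q lt_max.
have /andP [le_Fq_t lt_t_Fq1] := divn_bounds t.
have lt_low := le_lt_trans (coset_low_le_max le_Fq_t lt_t_Fq1 lt_t_a le_p_q) lt_max.
have x_ge0 : 0 <= m + G%:Z * (q - p)%N%:Z.
  by apply: (mulz_gtN_ge0 a_gt0); rewrite -(subzn le_p_q); lia.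
apply: (@dnum3_gt a b c a_gt0 b_gt0 c_gt0 _ _ (iota (q - p) p.+1)).
- exact: iota_uniq.
- by rewrite size_iota.
by move=> z; rewrite mem_iota => lim_z; apply: (reps_on_range le_Fq_t x_ge0); lia.
Qed.

Lemma dnum_gt_two_cosets {p t : nat} {m : int} :
  (p <= r)%N -> (t < a)%N -> (t %/ F < p)%N ->
  Num.max (g_case1 p) (g_case2 p) < b%:Z * t%:Z + a%:Z * m ->
  (p < dnum (b%:Z * t%:Z + a%:Z * m) [:: a; b; c])%N.
Proof.
set q := (t %/ F)%N; set q' := ((t + a) %/ F)%N => le_p_r lt_t_a lt_q_p lt_max.
have /andP [le_Fq_t lt_t_Fq1] := divn_bounds t.
have /andP [le_Fq'_ta lt_ta_Fq'1] := divn_bounds (t + a).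
have lt_high :=
  le_lt_trans (coset_high_le_max le_Fq_t lt_t_Fq1 le_Fq'_ta lt_ta_Fq'1 lt_q_p) lt_max.
set w := (q' + q + 1 - p)%N.
have ge_q' : (q + r <= q')%N by rewrite -ltnS -(ltn_pmul2l F_gt0); lia.
have lt_Gq'_b : (G * q' < b)%N.
  by rewrite -(ltn_pmul2l F_gt0) mulnCA; have := leq_mul (leqnn G) le_Fq'_ta; nia.
have x_ge0 : 0 <= m - b%:Z + G%:Z * w%:Z.
  by apply: (mulz_gtN_ge0 a_gt0); rewrite /w -subzn; lia.
have le_Gw_Gq' : G%:Z * w%:Z <= G%:Z * q'%:Z by rewrite ler_wpM2l //; lia.
apply: (@dnum3_gt a b c a_gt0 b_gt0 c_gt0 _ _ (iota 0 q.+1 ++ iota w (p - q))).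
- rewrite cat_uniq !iota_uniq andbT; apply/hasPn => z; rewrite !mem_iota /w; lia.
- by rewrite size_cat !size_iota; lia.
move=> z; rewrite mem_cat !mem_iota => /orP [lim_z | lim_z].
  by apply: (reps_on_range le_Fq_t (_ : 0 <= m + G%:Z * 0)); lia.
have -> : b%:Z * t%:Z + a%:Z * m = b%:Z * (t + a)%N%:Z + a%:Z * (m - b%:Z) by lia.
by apply: (reps_on_range le_Fq'_ta x_ge0); lia.
Qed.

Lemma dnum_gt_max p (n : int) :
  (p <= r)%N -> Num.max (g_case1 p) (g_case2 p) < n -> (p < dnum n [:: a; b; c])%N.
Proof.
move=> le_p_r; have [t [m [lt_t_a ->]]] := @residue_decomp a b n a_gt0 coprime_ab.
have [le_p_q | lt_q_p] := leqP p (t %/ F).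
  exact: dnum_gt_one_coset.
exact: dnum_gt_two_cosets.
Qed.

Theorem is_p_frobenius_max p : (p <= r)%N ->
  is_p_frobenius p [:: a; b; c] (Num.max (g_case1 p) (g_case2 p)).
Proof.
move=> le_p_r; split => [|n]; last exact: dnum_gt_max.
by rewrite maxEle; case: ifP => _; [apply: dnum_g_case2_leq | apply: dnum_g_case1_leq].
Qed.

End FrobeniusTriple.

Theorem theorem9 (i k p : nat) :
  (3 <= i)%N -> (3 <= k)%N ->
  let r := ((lucas i - 1) %/ fib k)%N in
  (p <= r)%N -> (r, p) != (0%N, 0%N) ->
  let Li := (lucas i)%:Z in
  let Li2 := (lucas (i + 2))%:Z in
  let Lik := (lucas (i + k))%:Z in
  let Fk := (fib k)%:Z in
  let Fk2 := (fib (k - 2))%:Z in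
  is_p_frobenius p [:: lucas i; lucas (i + 2); lucas (i + k)]
    (if Fk2 * Li <= (Li - r%:Z * Fk) * Li2
     then (Li - r%:Z * Fk - 1) * Li2 + (r%:Z + p%:Z) * Lik - Li
     else (Fk - 1) * Li2 + (r%:Z + p%:Z - 1) * Lik - Li).
Proof.
move=> _ le3_k r le_p_r rp_neq0 Li Li2 Lik Fk Fk2.
rewrite {}/Li {}/Li2 {}/Lik {}/Fk {}/Fk2.
have [k' def_k] : exists k', k = k'.+2 by exists (k - 2)%N; lia.
subst k; rewrite !subSS subn0.
have a_gt0 := lucas_gt0 i; have F_gt0 : (0 < fib k'.+2)%N := fib_gt0 k'.+1.
have c_def := lucas_addn_fib i k'.
have le_rF : (r * fib k'.+2 <= lucas i - 1)%N by rewrite leq_trunc_div.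
have lt_rF : (lucas i - 1 < r.+1 * fib k'.+2)%N by rewrite ltn_ceil.
have r_gt0 : (0 < r)%N.
  by rewrite lt0n; apply: contraNneq rp_neq0 => r0; move: le_p_r; rewrite r0 leqn0 => /eqP ->.
set g := if _ then _ else _.
have -> : g = Num.max (g_case1 (lucas i) (lucas (i + 2)) (fib k'.+2) (fib k') r p)
                      (g_case2 (lucas i) (lucas (i + 2)) (fib k'.+2) (fib k') r p).
  rewrite /g maxC maxEle /g_case1 /g_case2.
  set cond := (_ <= _ :> int); set cond' := (_ <= _ :> int).
  have -> : cond = cond' by apply/idP/idP; rewrite /cond /cond'; lia.
  by case: ifP; lia.
apply: is_p_frobenius_max; rewrite ?lucas_gt0 ?leq_fib_lucas_addn ?coprime_lucas_addn2 //; lia.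
Qed.
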